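(* Let $A,B\in U(2)$ and let $G(A,B)$ be the corresponding parity-preserving two-qubit unitary. Let $M$ be the set consisting of all two-qubit matchgates together with $G(A,B)$. If $G(A,B)$ is not a matchgate, i.e. if $\det(A)\neq\det(B)$, then gates from $M$ applied only to nearest-neighbour pairs of qubits in a line of qubits form a universal set for quantum computation (in the encoded sense described in the context).
   Context: For $2\times 2$ matrices $A=(A_{ij})$ and $B=(B_{ij})$, $G(A,B)$ denotes the $4\times 4$ matrix, in the computational basis $\{|00\rangle,|01\rangle,|10\rangle,|11\rangle\}$ of two qubits, given by $$G(A,B)=\begin{pmatrix} A_{11}&0&0&A_{12}\\ 0&B_{11}&B_{12}&0\\ 0&B_{21}&B_{22}&0\\ A_{21}&0&0&A_{22}\end{pmatrix},$$ i.e. $A$ acts on the even-parity subspace spanned by $|00\rangle,|11\rangle$ and $B$ on the odd-parity subspace spanned by $|01\rangle,|10\rangle$. A parity-preserving unitary is a unitary of this form with $A,B$ unitary. A matchgate is a parity-preserving unitary $G(A,B)$ with $\det(A)=\det(B)$. Qubits are arranged on a line and a two-qubit gate is nearest-neighbour if it acts on two adjacent qubits. Universality is meant in the encoded sense: each logical qubit is encoded in two adjacent physical qubits via $|0\rangle_L=|00\rangle$, $|1\rangle_L=|11\rangle$ (logical qubits placed consecutively along the line), and the claim is that nearest-neighbour circuits of gates from $M$ implement on the logical qubits a universal gate set (arbitrary single-qubit gates together with an entangling two-qubit gate), so that any quantum computation can be efficiently simulated, with preparation and measurement in the logical computational basis done by preparation and measurement in the physical computational basis. *)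

(* Complex scalars: any numClosedFieldType C (e.g. R[i]). *)
From mathcomp Require Import all_boot all_order all_algebra.
From mathcomp Require Export spectral.
Set Implicit Arguments. Unset Strict Implicit. Unset Printing Implicit Defensive.
Import Order.TTheory GRing.Theory Num.Theory.
Local Open Scope ring_scope.

Section QDefs.
Variable C : numClosedFieldType.

(* G(A,B) in the basis |00>,|01>,|10>,|11> (indices 0,1,2,3) *)
Definition Gmx (A B : 'M[C]_2) : 'M[C]_4 :=
  \matrix_(i < 4, j < 4)
   match val i, val j with
   | 0%N, 0%N => A 0 0 | 0%N, 3%N => A 0 1
   | 3%N, 0%N => A 1 0 | 3%N, 3%N => A 1 1
   | 1%N, 1%N => B 0 0 | 1%N, 2%N => B 0 1
   | 2%N, 1%N => B 1 0 | 2%N, 2%N => B 1 1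
   | _, _ => 0 end.

Definition parity_preserving (g : 'M[C]_4) : Prop :=
  exists A B : 'M[C]_2, [/\ A \is unitarymx, B \is unitarymx & g = Gmx A B].

Definition matchgate (g : 'M[C]_4) : Prop :=
  exists A B : 'M[C]_2,
    [/\ A \is unitarymx, B \is unitarymx, \det A = \det B & g = Gmx A B].

(* qubit q of a register corresponds to bit q of the basis index *)
Definition bit (x q : nat) : bool := odd (x %/ 2 ^ q).

(* the gate g (4x4) applied to qubits (q, q+1) of an n-qubit register;
   qubit q is the first (most significant) tensor factor of g *)
Definition apply2 (n q : nat) (g : 'M[C]_4) : 'M[C]_(2 ^ n) :=
  \matrix_(r, c)
    if [forall p : 'I_n, (val p != q) && (val p != q.+1) ==>
                         (bit r p == bit c p)]
    then g (inord (2 * bit r q + bit r q.+1))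
           (inord (2 * bit c q + bit c q.+1))
    else 0.

Definition apply1 (n q : nat) (u : 'M[C]_2) : 'M[C]_(2 ^ n) :=
  \matrix_(r, c)
    if [forall p : 'I_n, (val p != q) ==> (bit r p == bit c p)]
    then u (inord (bit r q)) (inord (bit c q))
    else 0.

(* a nearest-neighbour circuit on n qubits: list of (position q, gate),
   gate acting on qubits (q, q+1); the first element is applied first *)
Definition circuit_mx (n : nat) (c : seq (nat * 'M[C]_4)) : 'M[C]_(2 ^ n) :=
  foldl (fun acc qg => apply2 n qg.1 qg.2 *m acc) 1%:M c.

Definition nn_circuit_in (M : 'M[C]_4 -> Prop) (n : nat)
    (c : seq (nat * 'M[C]_4)) : Prop :=
  forall qg, qg \in c -> (qg.1.+1 < n)%N /\ M qg.2.

(* encoding of k logical qubits into 2k physical qubits: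
   |0>_L = |00>, |1>_L = |11>, logical qubit j on physical qubits 2j, 2j+1 *)
Definition encmx (k : nat) : 'M[C]_(2 ^ (2 * k), 2 ^ k) :=
  \matrix_(r, l)
    if [forall j : 'I_k, (bit r (2 * j) == bit l j) &&
                         (bit r (2 * j).+1 == bit l j)]
    then 1 else 0.

(* an entangling two-qubit gate: it maps some product state to a
   non-product state (basis index 2a+b for |a b>) *)
Definition product_vec (w : 'cV[C]_4) : Prop :=
  exists u v : 'cV[C]_2,
    forall a b : 'I_2, w (inord (2 * a + b)) 0 = u a 0 * v b 0.
Definition product_of (u v : 'cV[C]_2) : 'cV[C]_4 :=
  \matrix_(i < 4, j0 < 1) (u (inord (i %/ 2)) 0 * v (inord (i %% 2)) 0).
Definition entangling (E : 'M[C]_4) : Prop :=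
  exists u v : 'cV[C]_2, ~ product_vec (E *m product_of u v).

End QDefs.

From mathcomp Require Import all_boot all_order all_algebra.
From mathcomp Require Import zify ring.
Import Order.TTheory GRing.Theory Num.Theory.
Local Open Scope ring_scope.
Local Open Scope sesquilinear_scope.

(* A matchgate G(U,U) on the two physical qubits of a logical qubit acts on the
   code space span{|00>,|11>} as U, which gives every single-qubit logical gate.
   Following G(A^t*, B^t* diag(1,d)), d = det B * conj (det A), by G(A,B) yields
   G(1, diag(1,d)) = diag(1,1,d,1); the first factor is a matchgate because both
   blocks have determinant conj (det A).  As det A, det B are distinct and of
   modulus one, d <> 1, so this controlled phase is entangling, and placed on the
   physical qubits 2j+1, 2j+2, whose bits on code states are those of logical
   qubits j, j+1, it implements itself on the logical pair. *)

Lemma bit0E x : bit x 0 = odd x.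
Proof. by rewrite /bit expn0 divn1. Qed.

Lemma bitSE x q : bit x q.+1 = bit x./2 q.
Proof. by rewrite /bit expnS divnMA divn2. Qed.

Lemma mul2nK j : (2 * j)./2 = j.
Proof. by rewrite mul2n doubleK. Qed.

Lemma mul2nSK j : (2 * j).+1./2 = j.
Proof. by rewrite mul2n -[_.+1]/(true + j.*2)%N half_bit_double. Qed.

Lemma forall_ltn_mul2 k (P : nat -> Prop) :
  (forall p, (p < 2 * k)%N -> P p) <->
  (forall j, (j < k)%N -> P (2 * j)%N /\ P (2 * j).+1).
Proof.
split=> [allP j lt_j | allP p lt_p]; first by split; apply: allP; lia.
have [|P0 P1] := allP p./2; first by rewrite ltn_half_double -mul2n.
by rewrite -(odd_double_half p) -mul2n; case: (odd p).
Qed.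

Fixpoint nat_of_bits (n : nat) (f : nat -> bool) : nat :=
  if n is n'.+1 then (f 0%N + (nat_of_bits n' (fun p => f p.+1)).*2)%N else 0%N.

Lemma nat_of_bits_lt n f : (nat_of_bits n f < 2 ^ n)%N.
Proof.
elim: n f => [|n IH] f //=; have := IH (fun p => f p.+1).
by rewrite expnS; case: (f 0%N) => /=; lia.
Qed.

Lemma bit_nat_of_bits n f q : bit (nat_of_bits n f) q = (q < n)%N && f q.
Proof.
elim: n f q => [|n IH] f q /=; first by rewrite /bit div0n.
case: q => [|q]; first by rewrite bit0E oddD odd_double addbF oddb.
by rewrite bitSE half_bit_double IH.
Qed.

Lemma eq_nat_of_bits n f g :
  (forall p, (p < n)%N -> f p = g p) -> nat_of_bits n f = nat_of_bits n g.
Proof.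
elim: n f g => [|n IH] f g //= fg.
by rewrite fg // (IH (fun p => f p.+1) (fun p => g p.+1)) // => p lt_pn; apply: fg.
Qed.

Lemma nat_of_bitsK {n x} : (x < 2 ^ n)%N -> nat_of_bits n (bit x) = x.
Proof.
elim: n x => [|n IH] x /=; first by case: x.
move=> lt_x; rewrite bit0E (@eq_nat_of_bits n _ (bit x./2)) => [|p _]; last exact: bitSE.
by rewrite IH ?odd_double_half // ltn_half_double -mul2n -expnS.
Qed.

Definition ord_of_bits n (f : nat -> bool) : 'I_(2 ^ n) :=
  Ordinal (nat_of_bits_lt n f).

Lemma bit_ord_of_bits n f p : (p < n)%N -> bit (ord_of_bits n f) p = f p.
Proof. by move=> lt_pn; rewrite bit_nat_of_bits lt_pn. Qed.

Lemma bit_inj n (x y : 'I_(2 ^ n)) :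
  (forall p, (p < n)%N -> bit x p = bit y p) -> x = y.
Proof.
move=> xy; apply: val_inj => /=.
by rewrite -(nat_of_bitsK (ltn_ord x)) -(nat_of_bitsK (ltn_ord y)); exact: eq_nat_of_bits.
Qed.

Section Codewords.
Variable k : nat.
Implicit Types (l : 'I_(2 ^ k)) (r : 'I_(2 ^ (2 * k))).

Definition codeword l : 'I_(2 ^ (2 * k)) :=
  ord_of_bits (2 * k) (fun p => bit l p./2).

Definition decode r : 'I_(2 ^ k) :=
  ord_of_bits k (fun j => bit r (2 * j)).

Definition is_codeword r := codeword (decode r) == r.

Lemma bit_codeword l p : (p < 2 * k)%N -> bit (codeword l) p = bit l p./2.
Proof. exact: bit_ord_of_bits. Qed.

Lemma bit_decode r j : (j < k)%N -> bit (decode r) j = bit r (2 * j).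
Proof. exact: bit_ord_of_bits. Qed.

Lemma codewordP r l :
  reflect (forall p, (p < 2 * k)%N -> bit r p = bit l p./2) (r == codeword l).
Proof.
apply: (iffP eqP) => [-> p lt_p | rl]; first exact: bit_codeword.
by apply: bit_inj => p lt_p; rewrite bit_codeword ?rl.
Qed.

Lemma codewordK : cancel codeword decode.
Proof.
move=> l; apply: bit_inj => j lt_j.
by rewrite bit_decode // bit_codeword ?mul2nK //; lia.
Qed.

Lemma eq_codeword r l :
  (r == codeword l) = is_codeword r && (decode r == l).
Proof.
apply/eqP/andP => [-> | [/eqP rE /eqP <-] //].
by rewrite /is_codeword codewordK; split.
Qed.

Lemma bit_is_codeword r p : is_codeword r -> (p < 2 * k)%N ->
  bit r p = bit (decode r) p./2.
Proof. by move=> /eqP {1}<-; apply: bit_codeword. Qed.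

Variable C : numClosedFieldType.

Lemma encmxE r l : encmx C k r l = (r == codeword l)%:R.
Proof.
have -> : encmx C k r l = (if r == codeword l then 1 else 0) :> C.
  rewrite mxE; congr (if _ then _ else _); apply/forallP/codewordP => [rl | rl j].
    apply/forall_ltn_mul2 => j lt_j; have /andP[/eqP r0 /eqP r1] := rl (Ordinal lt_j).
    by rewrite mul2nK mul2nSK.
  have [|-> ->] := proj1 (forall_ltn_mul2 _ _) rl j; first exact: ltn_ord.
  by rewrite mul2nK mul2nSK !eqxx.
by case: eqP.
Qed.

Lemma mulmx_encmx (P : 'M[C]_(2 ^ (2 * k))) r l :
  (P *m encmx C k) r l = P r (codeword l).
Proof.
rewrite mxE (bigD1 (codeword l)) //= big1 => [|c /negbTE c_l].
  by rewrite encmxE eqxx mulr1 addr0.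
by rewrite encmxE c_l mulr0.
Qed.

Lemma encmx_mulmx (X : 'M[C]_(2 ^ k)) r l :
  (encmx C k *m X) r l = if is_codeword r then X (decode r) l else 0.
Proof.
rewrite mxE (bigD1 (decode r)) //= big1 => [|m /negbTE m_r].
  by rewrite encmxE eq_codeword eqxx andbT addr0; case: ifP; rewrite ?mul1r ?mul0r.
by rewrite encmxE eq_codeword eq_sym m_r andbF mul0r.
Qed.

End Codewords.

Arguments bit_is_codeword {k r p}.

Lemma inord_pair_eq (a b c d : bool) :
  ((inord (2 * a + b) : 'I_4) == inord (2 * c + d)) = (a == c) && (b == d).
Proof. by rewrite -val_eqE /= !inordK /=; case: a; case: b; case: c; case: d. Qed.

Lemma inord_pair_bit (t : 'I_4) : t = inord (2 * bit t 1 + bit t 0).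
Proof. by case: t => [[|[|[|[|m]]]] lt_m] //; apply: val_inj; rewrite /= inordK. Qed.

Section TwoQubitGates.
Variables (C : numClosedFieldType) (n : nat).
Implicit Types (q : nat) (r s c : 'I_(2 ^ n)) (g : 'M[C]_4).

Definition agree2 q r s :=
  [forall p : 'I_n, (val p != q) && (val p != q.+1) ==> (bit r p == bit s p)].

Definition pair_idx q (r : nat) : 'I_4 := inord (2 * bit r q + bit r q.+1).

Lemma apply2E q g r s :
  apply2 n q g r s = if agree2 q r s then g (pair_idx q r) (pair_idx q s) else 0.
Proof. by rewrite mxE. Qed.

Lemma agree2P q r s :
  reflect (forall p, (p < n)%N -> p != q -> p != q.+1 -> bit r p = bit s p)
          (agree2 q r s).
Proof.
apply: (iffP forallP) => [rs p lt_p pq pq1 | rs p].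
  by have /implyP/(_ _)/eqP := rs (Ordinal lt_p); apply; rewrite pq pq1.
by apply/implyP => /andP[pq pq1]; rewrite rs.
Qed.

Lemma agree2_refl q r : agree2 q r r.
Proof. exact/agree2P. Qed.

Lemma agree2_trans {q r s c} : agree2 q r s -> agree2 q s c -> agree2 q r c.
Proof.
move=> /agree2P rs /agree2P sc; apply/agree2P => p *.
by rewrite rs ?sc.
Qed.

Lemma agree2_sym {q r s} : agree2 q r s -> agree2 q s r.
Proof. by move=> /agree2P rs; apply/agree2P => p *; rewrite rs. Qed.

Lemma agree2_pair_idx_inj {q r s} : agree2 q r s -> pair_idx q r = pair_idx q s -> r = s.
Proof.
move=> /agree2P rs /eqP; rewrite inord_pair_eq => /andP[/eqP rs0 /eqP rs1].
apply: bit_inj => p lt_p.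
by case: (eqVneq p q) => [-> //|pq]; case: (eqVneq p q.+1) => [-> //|pq1]; apply: rs.
Qed.

Definition set_pair q c (t : 'I_4) : 'I_(2 ^ n) :=
  ord_of_bits n (fun p => if p == q then bit t 1
                          else if p == q.+1 then bit t 0 else bit c p).

Lemma agree2_set_pair q c t : agree2 q (set_pair q c t) c.
Proof.
apply/agree2P => p lt_p pq pq1.
by rewrite bit_ord_of_bits // (negbTE pq) (negbTE pq1).
Qed.

Lemma pair_idx_set_pair q c t : (q.+1 < n)%N -> pair_idx q (set_pair q c t) = t.
Proof.
move=> lt_q; rewrite /pair_idx !bit_ord_of_bits ?eqxx; try lia.
by rewrite [q.+1 == q](_ : _ = false) 1?[RHS]inord_pair_bit //; lia.
Qed.

Lemma set_pairE {q c s} : (q.+1 < n)%N -> agree2 q s c -> s = set_pair q c (pair_idx q s).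
Proof.
move=> lt_q sc; apply: (agree2_pair_idx_inj (q := q)); last by rewrite pair_idx_set_pair.
exact: agree2_trans sc (agree2_sym (agree2_set_pair q c _)).
Qed.

Lemma apply2M q g1 g2 : (q.+1 < n)%N ->
  apply2 n q g1 *m apply2 n q g2 = apply2 n q (g1 *m g2).
Proof.
move=> lt_q; apply/matrixP => r c; rewrite [in LHS]mxE apply2E [in RHS]mxE.
under eq_bigr do rewrite !apply2E.
case rc: (agree2 q r c); last first.
  rewrite big1 // => s _; case: (boolP (agree2 q r s)) => rs; last by rewrite mul0r.
  case: (boolP (agree2 q s c)) => sc; last by rewrite mulr0.
  by rewrite (agree2_trans rs sc) in rc.
rewrite (partition_big (fun s : 'I_(2 ^ n) => pair_idx q s) xpredT) //=; apply: eq_bigr => t _.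
rewrite (bigD1 (set_pair q c t)) /=; last by rewrite pair_idx_set_pair.
rewrite agree2_set_pair pair_idx_set_pair //.
rewrite (agree2_trans rc (agree2_sym (agree2_set_pair q c t))).
rewrite big1 ?addr0 // => s /andP[/eqP st s_ne].
case: (boolP (agree2 q s c)) => sc; last by rewrite mulr0.
by rewrite (set_pairE lt_q sc) st eqxx in s_ne.
Qed.

Lemma apply2_diagE q g r s : is_diag_mx g ->
  apply2 n q g r s = (r == s)%:R * g (pair_idx q s) (pair_idx q s).
Proof.
move=> /is_diag_mxP g_diag; rewrite apply2E.
case: eqP => [-> | rs]; first by rewrite agree2_refl mul1r.
rewrite mul0r; case: ifP => // rs_agree; apply: g_diag.
by apply/eqP => /val_inj /(agree2_pair_idx_inj rs_agree).
Qed.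

End TwoQubitGates.

Arguments agree2 {n}.

Section ParityPreserving.
Variable C : numClosedFieldType.
Implicit Types A B X Y : 'M[C]_2.

Lemma Gmx_pair A B (a b : bool) :
  Gmx A B (inord (2 * a + a)) (inord (2 * b + b)) = A (inord a) (inord b).
Proof.
have inord_bool (x : bool) : (inord x : 'I_2) = if x then 1 else 0.
  by case: x; apply: val_inj; rewrite /= inordK.
by rewrite mxE !inord_bool /= !inordK //; case: a; case: b.
Qed.

Lemma Gmx_mixed A B (a b : bool) :
  Gmx A B (inord (2 * a + ~~ a)) (inord (2 * b + b)) = 0.
Proof. by rewrite mxE /= !inordK //; case: a; case: b. Qed.

Lemma Gmx_mul A B X Y : Gmx A B *m Gmx X Y = Gmx (A *m X) (B *m Y).
Proof.
have w0 : widen_ord (leqnSn 1) (@ord_max 0) = 0 :> 'I_2 by apply: val_inj.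
have w1 : @ord_max 1 = 1 by apply: val_inj.
apply/matrixP => i j; rewrite !mxE !big_ord_recr big_ord0 /=.
case: i j => [[|[|[|[|i]]]] lt_i] [[|[|[|[|j]]]] lt_j] //=;
  rewrite ?mxE ?big_ord_recr ?big_ord0 /= ?mxE ?(mul0r, mulr0, add0r, addr0) ?w0 ?w1 //.
Qed.

Lemma Gmx_adj A B : (Gmx A B) ^t* = Gmx (A ^t*) (B ^t*).
Proof.
apply/matrixP => i j; rewrite !mxE.
by case: i j => [[|[|[|[|i]]]] lt_i] [[|[|[|[|j]]]] lt_j] //=; rewrite ?mxE ?rmorph0.
Qed.

Lemma Gmx1 : Gmx 1%:M 1%:M = 1%:M :> 'M[C]_4.
Proof.
apply/matrixP => i j; rewrite !mxE.
by case: i j => [[|[|[|[|i]]]] lt_i] [[|[|[|[|j]]]] lt_j] //=; rewrite ?mxE.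
Qed.

Lemma Gmx_unitary A B :
  A \is unitarymx -> B \is unitarymx -> Gmx A B \is unitarymx.
Proof.
move=> /unitarymxP A_u /unitarymxP B_u; apply/unitarymxP.
by rewrite Gmx_adj Gmx_mul A_u B_u Gmx1.
Qed.

Lemma Gmx_is_diag A B : is_diag_mx A -> is_diag_mx B -> is_diag_mx (Gmx A B).
Proof.
move=> /is_diag_mxP A_diag /is_diag_mxP B_diag; apply/is_diag_mxP => i j.
by case: i j => [[|[|[|[|i]]]] lt_i] [[|[|[|[|j]]]] lt_j] //= _; rewrite mxE /=
  ?A_diag ?B_diag.
Qed.

Lemma det_trmxC n (U : 'M[C]_n) : \det (U ^t*) = (\det U)^*.
Proof. by rewrite det_map_mx det_tr. Qed.

Lemma det_unitary n (U : 'M[C]_n) : U \is unitarymx -> \det U * (\det U)^* = 1.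
Proof.
move=> /unitarymxP U_u; have := congr1 determinant U_u.
by rewrite det_mulmx det_trmxC det1.
Qed.

Definition phase_mx (d : C) : 'M[C]_2 := diag_mx (\row_(i < 2) if i == 0 then 1 else d).

Lemma det_phase_mx d : \det (phase_mx d) = d.
Proof. by rewrite det_diag !big_ord_recr big_ord0 /= !mxE /= !mul1r. Qed.

Lemma phase_mx_unitary d : d * d^* = 1 -> phase_mx d \is unitarymx.
Proof.
move=> d_u; apply/unitarymxP/matrixP => i j.
rewrite !mxE !big_ord_recr big_ord0 /= !mxE.
by case: i j => [[|[|i]] lt_i] [[|[|j]] lt_j] //=;
  rewrite ?mxE /= ?(mul0r, mulr0, add0r, addr0, mul1r, rmorph0, rmorph1).
Qed.

Lemma diag_entangling (g : 'M[C]_4) :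
  is_diag_mx g -> g 0 0 * g 3 3 != g 1 1 * g 2 2 -> entangling g.
Proof.
move=> /is_diag_mxP g_diag g_ent.
(* On |+>|+> the amplitudes are g i i; a product vector w has w00 w11 = w01 w10. *)
exists (const_mx 1), (const_mx 1) => -[u [v uv]].
have gE (i : 'I_4) : (g *m product_of (const_mx 1) (const_mx 1)) i 0 = g i i.
  rewrite mxE (bigD1 i) //= big1 => [|j ji]; first by rewrite !mxE !mulr1 addr0.
  by rewrite g_diag ?mul0r // eq_sym.
have pairE (a b : 'I_2) (i : 'I_4) : val i = (2 * a + b)%N -> inord (2 * a + b) = i.
  by move=> <-; apply: inord_val.
move: (uv 0 0) (uv 0 1) (uv 1 0) (uv 1 1).
rewrite !gE (pairE 0 0 0) // (pairE 0 1 1) // (pairE 1 0 2) // (pairE 1 1 3) //.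
move=> g0 g1 g2 g3.
have swap : u 0 0 * v 0 0 * (u 1 0 * v 1 0) = u 0 0 * v 1 0 * (u 1 0 * v 0 0) by ring.
by move: g_ent; rewrite g0 g1 g2 g3 swap eqxx.
Qed.

End ParityPreserving.

Arguments phase_mx {C}.
Arguments det_unitary {C n U}.
Arguments Gmx_unitary {C A B}.
Arguments phase_mx_unitary {C d}.

Definition agree1 {n} q (r s : 'I_(2 ^ n)) :=
  [forall p : 'I_n, (val p != q) ==> (bit r p == bit s p)].

Lemma agree1P n q (r s : 'I_(2 ^ n)) :
  reflect (forall p, (p < n)%N -> p != q -> bit r p = bit s p) (agree1 q r s).
Proof.
apply: (iffP forallP) => [rs p lt_p pq | rs p].
  by have /implyP/(_ pq)/eqP := rs (Ordinal lt_p).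
by apply/implyP => pq; rewrite rs.
Qed.

Lemma apply1E (C : numClosedFieldType) n q (U : 'M[C]_2) r s :
  apply1 n q U r s = if agree1 q r s then U (inord (bit r q)) (inord (bit s q)) else 0.
Proof. by rewrite mxE. Qed.

Section EncodedGates.
Variables (C : numClosedFieldType) (k : nat).
Implicit Types (r : 'I_(2 ^ (2 * k))) (l : 'I_(2 ^ k)).

Lemma pair_idx_codeword_even j l : (j < k)%N ->
  pair_idx (2 * j) (codeword k l) = inord (2 * bit l j + bit l j).
Proof. by move=> lt_j; rewrite /pair_idx !bit_codeword ?mul2nK ?mul2nSK //; lia. Qed.

Lemma pair_idx_codeword_odd j l : (j.+1 < k)%N ->
  pair_idx (2 * j).+1 (codeword k l) = pair_idx j l.
Proof.
move=> lt_j; rewrite /pair_idx !bit_codeword ?mul2nSK; try lia.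
by rewrite (_ : (2 * j).+2 = 2 * j.+1)%N ?mul2nK //; lia.
Qed.

Lemma agree2_codeword j r l : (j < k)%N -> bit r (2 * j) = bit r (2 * j).+1 ->
  agree2 (2 * j) r (codeword k l) = is_codeword k r && agree1 j (decode k r) l.
Proof.
move=> lt_j r_pair; apply/agree2P/andP => [rl | [r_cw /agree1P rl] p lt_p].
  split; last first.
    apply/agree1P => i lt_i ij.
    by rewrite bit_decode // rl ?bit_codeword ?mul2nK //; lia.
  apply/eqP/bit_inj; apply/forall_ltn_mul2 => i lt_i.
  rewrite !bit_codeword ?mul2nK ?mul2nSK ?bit_decode //; try lia; split=> //.
  have [-> //|ij] := eqVneq i j.
  by rewrite !rl ?bit_codeword ?mul2nK ?mul2nSK //; lia.
move: p lt_p; apply/forall_ltn_mul2 => i lt_i.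
have [-> | ij] := eqVneq i j; first by split; rewrite eqxx // => _.
by split=> _ _; rewrite (bit_is_codeword r_cw) ?bit_codeword ?mul2nK ?mul2nSK ?rl //; lia.
Qed.

Lemma apply2_Gmx_encmx j (U : 'M[C]_2) : (j < k)%N ->
  apply2 (2 * k) (2 * j) (Gmx U U) *m encmx C k = encmx C k *m apply1 k j U.
Proof.
move=> lt_j; apply/matrixP => r l.
rewrite mulmx_encmx encmx_mulmx apply2E apply1E pair_idx_codeword_even // bit_decode //.
have [r_pair | r_mixed] := eqVneq (bit r (2 * j)) (bit r (2 * j).+1).
  by rewrite agree2_codeword // /pair_idx -r_pair Gmx_pair; case: is_codeword.
rewrite /pair_idx; have -> : is_codeword k r = false.
  apply: contraNF r_mixed => r_cw.
  by rewrite !(bit_is_codeword r_cw) ?mul2nK ?mul2nSK //; lia.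
have -> : bit r (2 * j).+1 = ~~ bit r (2 * j) by move: r_mixed; do 2!case: (bit _ _).
by rewrite Gmx_mixed; case: ifP.
Qed.

Lemma apply2_diag_encmx j (g : 'M[C]_4) : (j.+1 < k)%N -> is_diag_mx g ->
  apply2 (2 * k) (2 * j).+1 g *m encmx C k = encmx C k *m apply2 k j g.
Proof.
move=> lt_j g_diag; apply/matrixP => r l.
rewrite mulmx_encmx encmx_mulmx !apply2_diagE // pair_idx_codeword_odd // eq_codeword.
by case: is_codeword; rewrite ?mul0r.
Qed.

End EncodedGates.

Section ControlledPhase.
Variable C : numClosedFieldType.

Lemma unitarymx1 n : (1%:M : 'M[C]_n) \is unitarymx.
Proof. by apply/unitarymxP; rewrite trmx1 map_mx1 mulmx1. Qed.

Lemma cphase_is_diag (d : C) : is_diag_mx (Gmx 1%:M (phase_mx d)).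
Proof. by apply: Gmx_is_diag; rewrite ?scalar_mx_is_diag ?diag_mx_is_diag. Qed.

Lemma cphase_unitary (d : C) : d * d^* = 1 -> Gmx 1%:M (phase_mx d) \is unitarymx.
Proof. by move=> d_u; apply: Gmx_unitary (unitarymx1 _) (phase_mx_unitary d_u). Qed.

Lemma cphase_entangling (d : C) : d != 1 -> entangling (Gmx 1%:M (phase_mx d)).
Proof.
move=> d_ne1; apply: diag_entangling (cphase_is_diag d) _.
by rewrite !mxE /= !mul1r eq_sym.
Qed.

Variables (A B : 'M[C]_2).
Hypotheses (A_u : A \is unitarymx) (B_u : B \is unitarymx).

Definition det_quotient := \det B * (\det A)^*.

Lemma det_quotient_unit : det_quotient * det_quotient^* = 1.
Proof.
rewrite /det_quotient rmorphM /= conjCK mulrACA [(\det A)^* * _]mulrC.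
by rewrite !det_unitary // mulr1.
Qed.

Lemma det_quotient_eq1 : det_quotient = 1 -> \det A = \det B.
Proof.
move=> d1; rewrite -[\det B]mulr1 -(det_unitary A_u) [\det A * _]mulrC mulrA.
by rewrite -/det_quotient d1 mul1r.
Qed.

Lemma matchgate_cphase_cofactor :
  matchgate (Gmx (A ^t*) (B ^t* *m phase_mx det_quotient)).
Proof.
exists (A ^t*), (B ^t* *m phase_mx det_quotient); split=> //.
- by rewrite trmxC_unitary.
- by rewrite mul_unitarymx ?trmxC_unitary ?phase_mx_unitary ?det_quotient_unit.
rewrite det_mulmx !det_trmxC det_phase_mx /det_quotient mulrA [_^* * _]mulrC.
by rewrite det_unitary // mul1r.
Qed.

Lemma Gmx_mul_cphase_cofactor :
  Gmx A B *m Gmx (A ^t*) (B ^t* *m phase_mx det_quotient) =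
  Gmx 1%:M (phase_mx det_quotient).
Proof. by rewrite Gmx_mul (unitarymxP A_u) mulmxA (unitarymxP B_u) mul1mx. Qed.

End ControlledPhase.

Arguments det_quotient {C}.
Arguments det_quotient_unit {C A B}.
Arguments det_quotient_eq1 {C A B}.
Arguments matchgate_cphase_cofactor {C A B}.
Arguments Gmx_mul_cphase_cofactor {C A B}.

Theorem theorem2 (C : numClosedFieldType) (A B : 'M[C]_2) :
  A \is unitarymx -> B \is unitarymx -> \det A != \det B ->
  let M := fun g : 'M[C]_4 => matchgate g \/ g = Gmx A B in
  exists N : nat,
  forall k : nat,
    (forall (j : nat) (U : 'M[C]_2), (j < k)%N -> U \is unitarymx ->
       exists c : seq (nat * 'M[C]_4),
         [/\ nn_circuit_in M (2 * k) c, (size c <= N)%N &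
             circuit_mx (2 * k) c *m encmx C k = encmx C k *m apply1 k j U])
    /\
    (forall j : nat, (j.+1 < k)%N ->
       exists E : 'M[C]_4, [/\ E \is unitarymx, entangling E &
       exists c : seq (nat * 'M[C]_4),
         [/\ nn_circuit_in M (2 * k) c, (size c <= N)%N &
             circuit_mx (2 * k) c *m encmx C k = encmx C k *m apply2 k j E]]).
Proof.
move=> A_u B_u detAB M; pose d := det_quotient A B.
have d_ne1 : d != 1 by apply: contra detAB => /eqP /(det_quotient_eq1 A_u) ->.
exists 2%N => k; split=> [j U lt_j U_u | j lt_j].
  exists [:: (2 * j, Gmx U U)%N]; split=> //; last first.
    by rewrite /circuit_mx /= mulmx1 apply2_Gmx_encmx.
  by move=> qg; rewrite inE => /eqP -> /=; split; [lia | left; exists U, U].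
exists (Gmx 1%:M (phase_mx d)); split.
- exact/cphase_unitary/(det_quotient_unit A_u B_u).
- exact: cphase_entangling.
exists [:: ((2 * j).+1, Gmx (A ^t*) (B ^t* *m phase_mx d)); ((2 * j).+1, Gmx A B)].
split=> //; last first.
  rewrite /circuit_mx /= mulmx1 apply2M; last by lia.
  by rewrite Gmx_mul_cphase_cofactor // apply2_diag_encmx // cphase_is_diag.
move=> qg; rewrite !inE => /orP[] /eqP -> /=; split; try lia.
  by left; apply: matchgate_cphase_cofactor.
by right.
Qed.
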